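(* Let $k\ge1$, $0\le r<k$ and $n\ge0$ be integers. Then $$\sum_{j=0}^n(-1)^{n-j}\begin{bmatrix} n+r\\ n-j\end{bmatrix}_q q^{(k-1)\left(\binom{n}{2}-\binom{j}{2}\right)}F^{(k)}_{kj+r}(x;q)=x^{n+r}F^{(k)}_{(k-1)n}(x;q).$$
   Context: Here $q$ is an indeterminate. For integers $m\ge0$ and $j$, $\begin{bmatrix} m\\ j\end{bmatrix}_q=\frac{(1-q^m)(1-q^{m-1})\cdots(1-q^{m-j+1})}{(1-q)(1-q^2)\cdots(1-q^j)}$ for $0\le j\le m$ and $0$ otherwise. For an integer $k\ge1$, the $q$-Fibonacci polynomials $F^{(k)}_n(x;q)$ ($n\ge0$) are defined by $F^{(k)}_n(x;q)=x^n$ for $0\le n<k$ and $F^{(k)}_{n+k}(x;q)=xF^{(k)}_{n+k-1}(x;q)+q^nF^{(k)}_n(x;q)$ for $n\ge0$. *)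

From HB Require Import structures.
From mathcomp Require Import all_boot all_order all_algebra.
Set Implicit Arguments. Unset Strict Implicit. Unset Printing Implicit Defensive.
Import Order.TTheory GRing.Theory Num.Theory.
Local Open Scope ring_scope.

Definition qbinom (F : fieldType) (q : F) (m j : nat) : F :=
  if (j <= m)%N then
    (\prod_(i < j) (1 - q ^+ (m - i)%N)) / (\prod_(i < j) (1 - q ^+ i.+1))
  else 0.

(* q-Fibonacci polynomials F^(k)_n(x;q), k >= 1:
   F_n = x^n for n < k, and F_{m} = x F_{m-1} + q^(m-k) F_{m-k} for m >= k
   (i.e. F_{n+k} = x F_{n+k-1} + q^n F_n).
   qfib_seq k x q N is the list [F_0; ...; F_N]. *)
Fixpoint qfib_seq (R : comNzRingType) (k : nat) (x q : R) (N : nat) : seq R :=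
  match N with
  | 0%N => [:: 1]
  | N'.+1 =>
      let s := qfib_seq k x q N' in
      rcons s (if (N < k)%N then x ^+ N
               else x * nth 0 s N' + q ^+ (N - k) * nth 0 s (N - k))
  end.

Definition qfib (R : comNzRingType) (k : nat) (x q : R) (n : nat) : R :=
  nth 0 (qfib_seq k x q n) n.

From HB Require Import structures.
From mathcomp Require Import all_boot all_order all_algebra.
From mathcomp Require Import zify ring.
Set Implicit Arguments. Unset Strict Implicit. Unset Printing Implicit Defensive.
Import Order.TTheory GRing.Theory Num.Theory.
Local Open Scope ring_scope.

(* Iterating the q-Pascal rule gives the explicit expansion
   F_N = \sum_i q^(k C(i,2)) [N - (k-1) i, i]_q x^(N - k i).  Written this way both
   sides of the identity are supported on the powers x^(k d + r), d <= n, and after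
   substituting n = d + m, j = d + i the coefficients agree by the alternating summation
   \sum_i (-1)^(m-i) [m+c, m-i]_q [B+c+i, i]_q q^(C(i,2) + B(m-i)) = q^C(m,2) [B, m]_q,
   proved by induction on m, c and B from the two q-Pascal rules; its base case
   c = B = 0 is the q-binomial theorem evaluated at -1. *)

Lemma bin2D m n : 'C(m + n, 2) = ('C(m, 2) + m * n + 'C(n, 2))%N.
Proof.
elim: n => [|n IHn]; first by rewrite !addn0 muln0 addn0.
by rewrite addnS binS IHn bin1 binS bin1; lia.
Qed.

Lemma sum_nat_trunc (V : nmodType) (f : nat -> V) m n :
  (forall i, (m <= i)%N -> f i = 0) -> (m <= n)%N ->
  \sum_(0 <= i < n) f i = \sum_(0 <= i < m) f i.
Proof.
move=> f0 le_mn; rewrite (big_cat_nat (leq0n m) le_mn) /= [X in _ + X]big1_seq ?addr0 //.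
by move=> i /andP[_]; rewrite mem_index_iota => /andP[/f0].
Qed.

Lemma exchange_sum_nat_triangle (V : nmodType) n (g : nat -> nat -> V) :
  \sum_(0 <= j < n.+1) \sum_(0 <= d < j.+1) g j d
  = \sum_(0 <= d < n.+1) \sum_(d <= j < n.+1) g j d.
Proof.
elim: n => [|n IHn]; first by rewrite !big_nat1.
rewrite big_nat_recr //= IHn [RHS]big_nat_recr //= big_nat1.
rewrite [X in _ + X = _]big_nat_recr //= addrA -big_split /=; congr (_ + _).
by apply: eq_big_nat => d /andP[_ ltdn]; rewrite [RHS]big_nat_recr // ltnW.
Qed.

Section QBinomial.
Variables (F : fieldType) (q : F).
Hypothesis q_not_root1 : forall i : nat, (0 < i)%N -> q ^+ i != 1.

Lemma onem_qexpS_neq0 i : 1 - q ^+ i.+1 != 0.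
Proof. by rewrite subr_eq0 eq_sym q_not_root1. Qed.

Lemma qbinom0 m : qbinom q m 0 = 1.
Proof. by rewrite /qbinom leq0n !big_ord0 divr1. Qed.

Lemma qbinom_small m t : (m < t)%N -> qbinom q m t = 0.
Proof. by rewrite /qbinom ltnNge => /negbTE ->. Qed.

Lemma qbinomSS_mul m t : (t <= m)%N ->
  qbinom q m.+1 t.+1 * (1 - q ^+ t.+1) = (1 - q ^+ m.+1) * qbinom q m t.
Proof.
move=> le_tm; rewrite /qbinom le_tm ltnS le_tm big_ord_recl big_ord_recr /= subn0.
have -> : \prod_(i < t) (1 - q ^+ (m.+1 - bump 0 i)) = \prod_(i < t) (1 - q ^+ (m - i)).
  by apply: eq_bigr => i _; rewrite /bump /= add1n subSS.
have den_neq0 : \prod_(i < t) (1 - q ^+ i.+1) != 0.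
  by apply/prodf_neq0 => i _; apply: onem_qexpS_neq0.
by field; rewrite den_neq0 onem_qexpS_neq0.
Qed.

Lemma qbinomS_mul m t : (t < m)%N ->
  qbinom q m t.+1 * (1 - q ^+ t.+1) = (1 - q ^+ (m - t)) * qbinom q m t.
Proof.
move=> lt_tm; rewrite /qbinom lt_tm (ltnW lt_tm) !big_ord_recr /=.
have den_neq0 : \prod_(i < t) (1 - q ^+ i.+1) != 0.
  by apply/prodf_neq0 => i _; apply: onem_qexpS_neq0.
by field; rewrite den_neq0 onem_qexpS_neq0.
Qed.

Lemma qbinomn m : qbinom q m m = 1.
Proof.
elim: m => [|m IHm]; first exact: qbinom0.
apply: (mulIf (onem_qexpS_neq0 m)).
by rewrite qbinomSS_mul // IHm mulr1 mul1r.
Qed.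

Lemma qbinomS m t : qbinom q m.+1 t.+1 = qbinom q m t + q ^+ t.+1 * qbinom q m t.+1.
Proof.
case: (ltngtP t m) => [lt_tm | lt_mt | ->].
- apply: (mulIf (onem_qexpS_neq0 t)).
  rewrite qbinomSS_mul ?(ltnW lt_tm) // [RHS]mulrDl -[in RHS]mulrA qbinomS_mul //.
  have -> : q ^+ m.+1 = q ^+ t.+1 * q ^+ (m - t) by rewrite -exprD; congr (_ ^+ _); lia.
  ring.
- by rewrite !qbinom_small ?mulr0 ?addr0 //; lia.
- by rewrite !qbinomn qbinom_small ?mulr0 ?addr0.
Qed.

Lemma qbinomS_rev m t :
  qbinom q m.+1 t.+1 = qbinom q m t.+1 + q ^+ (m - t) * qbinom q m t.
Proof.
case: (ltngtP t m) => [lt_tm | lt_mt | ->].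
- apply: (mulIf (onem_qexpS_neq0 t)).
  rewrite qbinomSS_mul ?(ltnW lt_tm) // [RHS]mulrDl qbinomS_mul //.
  have -> : q ^+ m.+1 = q ^+ t.+1 * q ^+ (m - t) by rewrite -exprD; congr (_ ^+ _); lia.
  ring.
- by rewrite !qbinom_small ?mulr0 ?addr0 //; lia.
- by rewrite !qbinomn qbinom_small ?subnn ?expr0 ?mul1r ?add0r.
Qed.

Definition alt_qbinom_sum m c B := \sum_(0 <= i < m.+1)
  (-1) ^+ (m - i) * qbinom q (m + c) (m - i) * qbinom q (B + c + i) i
  * q ^+ ('C(i, 2) + B * (m - i)).

Lemma alt_qbinom_sumSc m c B :
  alt_qbinom_sum m.+1 c.+1 B = alt_qbinom_sum m.+1 c B.+1 - q ^+ B * alt_qbinom_sum m c.+1 B.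
Proof.
rewrite /alt_qbinom_sum big_nat_recr //= [in RHS]big_nat_recr //= subnn !qbinom0.
rewrite !expr0 !muln0 !addn0 (_ : (B.+1 + c + m.+1 = B + c.+1 + m.+1)%N); last lia.
rewrite addrAC; congr (_ + _); rewrite big_distrr -sumrB /=.
apply: eq_big_nat => i /andP[_ le_im]; have -> : (m.+1 - i = (m - i).+1)%N by lia.
rewrite [(m.+1 + c.+1)%N]addnS qbinomS [X in qbinom _ X (m - i)]addSnnS.
rewrite (_ : (B + c.+1 + i = B.+1 + c + i)%N); last lia.
have -> : q ^+ ('C(i, 2) + B.+1 * (m - i).+1)
          = q ^+ (m - i).+1 * q ^+ B * q ^+ ('C(i, 2) + B * (m - i)).
  by rewrite -!exprD; congr (_ ^+ _); nia.
have -> : q ^+ ('C(i, 2) + B * (m - i).+1) = q ^+ B * q ^+ ('C(i, 2) + B * (m - i)).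
  by rewrite -exprD; congr (_ ^+ _); nia.
by rewrite exprS; ring.
Qed.

Lemma alt_qbinom_sumSB m c B : alt_qbinom_sum m.+1 c B.+1
  = q ^+ m.+1 * alt_qbinom_sum m.+1 c B + q ^+ m * alt_qbinom_sum m c.+1 B.
Proof.
rewrite /alt_qbinom_sum !(big_nat_recl m.+1) // mulrDr addrAC -addrA; congr (_ + _).
  rewrite !subn0 !addn0 !qbinom0 !mulr1 add0n.
  by rewrite (_ : (B.+1 * m.+1 = m.+1 + B * m.+1)%N) // exprD; ring.
rewrite !big_distrr -big_split /=; apply: eq_big_nat => i /andP[_ lt_im].
rewrite subSS !addSnnS [(B + c.+1 + i.+1)%N]addnS qbinomS.
have -> : qbinom q (B + c.+1 + i) i.+1 = qbinom q (B + c + i.+1) i.+1.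
  by rewrite addnS addSnnS.
have -> : q ^+ ('C(i.+1, 2) + B.+1 * (m - i)) = q ^+ m * q ^+ ('C(i, 2) + B * (m - i)).
  by rewrite -exprD; congr (_ ^+ _); rewrite binS bin1; nia.
have -> : q ^+ ('C(i.+1, 2) + B * (m - i)) = q ^+ i * q ^+ ('C(i, 2) + B * (m - i)).
  by rewrite -exprD; congr (_ ^+ _); rewrite binS bin1; lia.
by rewrite !exprS; ring.
Qed.

(* alt_qbinom_row m = \prod_(i < m) (q ^+ i - 1), a product with the factor 0 at i = 0. *)
Definition alt_qbinom_row m :=
  \sum_(0 <= i < m.+1) (-1) ^+ (m - i) * qbinom q m (m - i) * q ^+ 'C(i, 2).

Lemma alt_qbinom_rowS m : alt_qbinom_row m.+1 = (q ^+ m - 1) * alt_qbinom_row m.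
Proof.
pose t i := (-1) ^+ (m.+1 - i) * q ^+ (m.+1 - i) * qbinom q m (m.+1 - i) * q ^+ 'C(i, 2).
have qm_row : q ^+ m * alt_qbinom_row m = \sum_(0 <= i < m.+2) t i.
  rewrite big_nat_recl // {1}/t subn0 qbinom_small // mulr0 !mul0r add0r.
  rewrite /alt_qbinom_row big_distrr /=; apply: eq_big_nat => i /andP[_ le_im].
  rewrite /t subSS binS bin1 exprD.
  have -> : q ^+ m = q ^+ (m - i) * q ^+ i by rewrite -exprD subnK.
  ring.
rewrite mulrBl qm_row mul1r /alt_qbinom_row big_nat_recr //= [X in _ = X - _]big_nat_recr //=.
rewrite subnn qbinom0 /t subnn !expr0 qbinom0 !mul1r addrAC; congr (_ + _).
rewrite -sumrB; apply: eq_big_nat => i /andP[_ le_im].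
by rewrite /t (_ : (m.+1 - i = (m - i).+1)%N) ?qbinomS ?exprS; [ring | lia].
Qed.

Lemma alt_qbinom_rowE m : alt_qbinom_row m = (m == 0)%:R.
Proof.
case: m => [|m]; first by rewrite /alt_qbinom_row big_nat1 qbinom0 expr0 !mulr1.
by elim: m => [|m IHm]; rewrite alt_qbinom_rowS ?IHm ?mulr0 // expr0 subrr mul0r.
Qed.

Lemma alt_qbinom_sumE m c B : alt_qbinom_sum m c B = q ^+ 'C(m, 2) * qbinom q B m.
Proof.
elim: m c B => [|m IHm] c B.
  by rewrite /alt_qbinom_sum big_nat1 !qbinom0 !muln0 addn0 !expr0 !mul1r.
elim: c B => [|c IHc] B.
  elim: B => [|B IHB].
    transitivity (alt_qbinom_row m.+1); last by rewrite alt_qbinom_rowE qbinom_small ?mulr0.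
    by apply: eq_bigr => i _; rewrite !addn0 add0n qbinomn mulr1.
  by rewrite alt_qbinom_sumSB IHB IHm qbinomS binS bin1 exprD; ring.
rewrite alt_qbinom_sumSc IHc IHm qbinomS_rev binS bin1.
case: (leqP m B) => [le_mB | lt_Bm]; last by rewrite (qbinom_small lt_Bm) !mulr0 addr0 subr0.
rewrite mulrDr mulrA -exprD (_ : ('C(m, 2) + m + (B - m) = B + 'C(m, 2))%N); last lia.
by rewrite !exprD; ring.
Qed.

(* The coefficient of x^(K.+1 * d + r) on both sides of the main identity. *)
Lemma alt_qbinom_shifted_sumE K n d r : (d <= n)%N ->
  \sum_(d <= j < n.+1) (-1) ^+ (n - j) * qbinom q (n + r) (n - j)
     * q ^+ (K * ('C(n, 2) - 'C(j, 2)))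
     * (q ^+ (K.+1 * 'C(j - d, 2)) * qbinom q (j + K * d + r) (j - d))
  = q ^+ (K.+1 * 'C(n - d, 2)) * qbinom q (K * d) (n - d).
Proof.
move=> le_dn.
have [m ->] : exists m, n = (d + m)%N by exists (n - d)%N; rewrite subnKC.
rewrite -{1}[d]add0n big_addn addKn (_ : ((d + m).+1 - d = m.+1)%N); last lia.
rewrite [in RHS]mulSn [in RHS]exprD -[in RHS]mulrA [in RHS]mulrCA.
rewrite -(alt_qbinom_sumE m (d + r)) /alt_qbinom_sum big_distrr /=.
apply: eq_big_nat => i /andP[_ lt_im].
have [e ->] : exists e, m = (i + e)%N by exists (m - i)%N; rewrite subnKC.
rewrite addnK !addKn (_ : (d + (i + e) - (i + d) = e)%N); last lia.
rewrite (_ : (d + (i + e) + r = i + e + (d + r))%N); last lia.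
rewrite (_ : (i + d + K * d + r = K * d + (d + r) + i)%N); last lia.
have exp_eq : (K * ('C(d + (i + e), 2) - 'C(i + d, 2)) + K.+1 * 'C(i, 2)
               = K * 'C(i + e, 2) + ('C(i, 2) + K * d * e))%N.
  by rewrite !bin2D; nia.
transitivity ((-1) ^+ e * qbinom q (i + e + (d + r)) e * qbinom q (K * d + (d + r) + i) i
  * (q ^+ (K * ('C(d + (i + e), 2) - 'C(i + d, 2))) * q ^+ (K.+1 * 'C(i, 2)))); first ring.
by rewrite -exprD exp_eq exprD; ring.
Qed.

End QBinomial.

Section QFibonacci.
Variables (R : comNzRingType) (k : nat) (x q : R).

Lemma size_qfib_seq n : size (qfib_seq k x q n) = n.+1.
Proof. by elim: n => //= n IHn; rewrite size_rcons IHn. Qed.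

Lemma nth_qfib_seq n i : (i <= n)%N -> nth 0 (qfib_seq k x q n) i = qfib k x q i.
Proof.
elim: n => [|n IHn]; first by rewrite leqn0 => /eqP ->.
rewrite leq_eqVlt ltnS => /orP[/eqP -> // | le_in].
by rewrite /= nth_rcons size_qfib_seq ltnS le_in IHn.
Qed.

Lemma qfibS n : (0 < k)%N -> qfib k x q n.+1 = if (n.+1 < k)%N then x ^+ n.+1
  else x * qfib k x q n + q ^+ (n.+1 - k) * qfib k x q (n.+1 - k).
Proof.
move=> k_gt0; rewrite {1}/qfib /= nth_rcons size_qfib_seq ltnn eqxx.
by case: ifP => // _; rewrite !nth_qfib_seq // leq_subLR -add1n leq_add2r.
Qed.

Lemma qfib_small n : (n < k)%N -> qfib k x q n = x ^+ n.
Proof.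
case: n => [|n] lt_nk; first by rewrite /qfib /= expr0.
by rewrite qfibS ?lt_nk // (leq_ltn_trans _ lt_nk).
Qed.

End QFibonacci.

Section QFibonacciExpansion.
Variables (F : fieldType) (q x : F) (K : nat).
Hypothesis q_not_root1 : forall i : nat, (0 < i)%N -> q ^+ i != 1.

Lemma qfib_rec n :
  qfib K.+1 x q (n + K.+1) = x * qfib K.+1 x q (n + K) + q ^+ n * qfib K.+1 x q n.
Proof. by rewrite addnS qfibS // ltnS ltnNge leq_addl /= subSS addnK. Qed.

Definition qfib_term n i :=
  q ^+ (K.+1 * 'C(i, 2)) * qbinom q (n - K * i) i * x ^+ (n - K.+1 * i).

Lemma qfib_term0 n : qfib_term n 0 = x ^+ n.
Proof. by rewrite /qfib_term !muln0 !subn0 qbinom0 expr0 !mul1r. Qed.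

Lemma qfib_term_eq0 n i : (n < K.+1 * i)%N -> qfib_term n i = 0.
Proof. by move=> lt_n_ki; rewrite /qfib_term qbinom_small ?mulr0 ?mul0r //; lia. Qed.

Lemma qfib_termS n i :
  qfib_term (n + K.+1) i.+1 = x * qfib_term (n + K) i.+1 + q ^+ n * qfib_term n i.
Proof.
case: (ltnP n (K.+1 * i)) => [lt_n_ki | le_ki_n].
  by rewrite !qfib_term_eq0 ?mulr0 ?addr0 // mulnS; lia.
have [s ->] : exists s, n = (K.+1 * i + s)%N by exists (n - K.+1 * i)%N; rewrite subnKC.
have e1 : (K.+1 * i + s + K.+1 - K * i.+1 = (s + i).+1)%N by rewrite mulnS mulSn; lia.
have e2 : (K.+1 * i + s + K - K * i.+1 = s + i)%N by rewrite mulnS mulSn; lia.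
have e3 : (K.+1 * i + s - K * i = s + i)%N by rewrite mulSn; lia.
have e4 : (K.+1 * i + s + K.+1 - K.+1 * i.+1 = s)%N by rewrite mulnS; lia.
have e5 : (K.+1 * i + s - K.+1 * i = s)%N by lia.
rewrite /qfib_term e1 e2 e3 e4 e5 qbinomS_rev // addnK binS bin1 mulnDr exprD.
case: s {e1 e2 e3 e4 e5} => [|s].
  by rewrite add0n addn0 (qbinom_small q (ltnSn i)) !expr0; ring.
have e6 : (K.+1 * i + s.+1 + K - K.+1 * i.+1 = s)%N by rewrite mulnS; lia.
by rewrite e6 !exprD (exprS x); ring.
Qed.

Lemma sum_qfib_term_widen n M M' : (n < K.+1 * M)%N -> (n < K.+1 * M')%N ->
  \sum_(0 <= i < M) qfib_term n i = \sum_(0 <= i < M') qfib_term n i.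
Proof.
wlog le_MM' : M M' / (M <= M')%N => [hwlog | ltnM _].
  by case: (leqP M M') => [|/ltnW] le ? ?; [|symmetry]; apply: hwlog.
apply/esym/sum_nat_trunc => // i le_Mi; apply: qfib_term_eq0.
by apply: (leq_trans ltnM); rewrite leq_mul2l.
Qed.

Lemma qfib_expansion n M :
  (n < K.+1 * M)%N -> qfib K.+1 x q n = \sum_(0 <= i < M) qfib_term n i.
Proof.
elim/ltn_ind: n M => n IHn M ltnM.
have [lt_nk | le_kn] := ltnP n K.+1.
  by rewrite qfib_small // (sum_qfib_term_widen ltnM (_ : n < K.+1 * 1)%N) ?muln1 //
    big_nat1 qfib_term0.
have [p def_n] : exists p, n = (p + K.+1)%N by exists (n - K.+1)%N; rewrite subnK.
rewrite {}def_n in IHn ltnM *.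
rewrite qfib_rec (IHn (p + K)%N _ (p + K).+2) ?(IHn p _ (p + K).+1); try nia.
rewrite (sum_qfib_term_widen ltnM (_ : p + K.+1 < K.+1 * (p + K).+2)%N); last nia.
rewrite [RHS]big_nat_recl // [X in x * X]big_nat_recl // !qfib_term0.
rewrite (eq_big_nat _ _ (fun i _ => qfib_termS p i)).
by rewrite big_split -!big_distrr /= mulrDr addrA addnS exprS.
Qed.

Lemma qfib_mulS_add j r : (r <= K)%N ->
  qfib K.+1 x q (K.+1 * j + r) = \sum_(0 <= d < j.+1)
    q ^+ (K.+1 * 'C(j - d, 2)) * qbinom q (j + K * d + r) (j - d) * x ^+ (K.+1 * d + r).
Proof.
move=> le_rK; rewrite (qfib_expansion (_ : _ < K.+1 * j.+1)%N); last by rewrite mulnS; lia.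
rewrite big_nat_rev /=; apply: eq_big_nat => d /andP[_ lt_dj].
rewrite add0n subSS /qfib_term.
have [e ->] : exists e, j = (d + e)%N by exists (j - d)%N; rewrite subnKC // ltnW.
rewrite addKn (_ : (K.+1 * (d + e) + r - K * e = d + e + K * d + r)%N); last nia.
by rewrite (_ : (K.+1 * (d + e) + r - K.+1 * e = K.+1 * d + r)%N); last nia.
Qed.

Lemma exprn_qfib_mul n r : x ^+ (n + r) * qfib K.+1 x q (K * n) = \sum_(0 <= d < n.+1)
    q ^+ (K.+1 * 'C(n - d, 2)) * qbinom q (K * d) (n - d) * x ^+ (K.+1 * d + r).
Proof.
rewrite (qfib_expansion (_ : _ < K.+1 * n.+1)%N); last by rewrite mulSn mulnS; lia.
rewrite big_nat_rev big_distrr /=; apply: eq_big_nat => d /andP[_ lt_dn].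
rewrite add0n subSS /qfib_term.
have [e def_n] : exists e, n = (d + e)%N by exists (n - d)%N; rewrite subnKC // ltnW.
rewrite {}def_n addKn (_ : (K * (d + e) - K * e = K * d)%N); last nia.
have [lt_Kd_e | le_e_Kd] := ltnP (K * d) e.
  by rewrite (qbinom_small q lt_Kd_e) !(mulr0, mul0r).
by rewrite mulrCA -exprD (_ : (d + e + r + (K * (d + e) - K.+1 * e) = K.+1 * d + r)%N) //; nia.
Qed.

End QFibonacciExpansion.

Theorem mainTheorem17 (F : fieldType) (q x : F)
  (hq : forall i : nat, (0 < i)%N -> q ^+ i != 1)
  (k r n : nat) (hk : (1 <= k)%N) (hr : (r < k)%N) :
  \sum_(0 <= j < n.+1)
     (-1) ^+ (n - j) * qbinom q (n + r) (n - j)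
     * q ^+ ((k - 1) * ('C(n, 2) - 'C(j, 2)))
     * qfib k x q (k * j + r)
  = x ^+ (n + r) * qfib k x q ((k - 1) * n).
Proof.
have [K def_k] : exists K, k = K.+1 by exists k.-1; rewrite prednK.
rewrite {}def_k ltnS in hr *; rewrite subn1 /=.
under eq_big_nat => j _ do rewrite (qfib_mulS_add x hq _ hr) big_distrr.
rewrite exchange_sum_nat_triangle (exprn_qfib_mul x K hq).
apply: eq_big_nat => d /andP[_]; rewrite ltnS => le_dn.
rewrite -(alt_qbinom_shifted_sumE hq K r le_dn) big_distrl /=.
by apply: eq_bigr => j _; ring.
Qed.
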